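(* Fix $\alpha>1$, $R>0$, an integer $T>1$, $G_c>0$, $N_0>0$ and $\beta,\delta,\mu>0$. For $\rho_r>0$ put $\Theta(\rho_r)=(\alpha,\rho_r,\beta\rho_r,\delta\rho_r,\mu\rho_r,T)$ and $\eta^\star_{zf}(R,\Theta)=\frac{G_c}{N_0}\zeta^\star_{zf}(R,\Theta)$. If $\rho_{r_2}>\rho_{r_1}>0$, then $\eta^\star_{zf}(R,\Theta(\rho_{r_1}))>\eta^\star_{zf}(R,\Theta(\rho_{r_2}))$.
   Context: For $\Theta=(\alpha,\rho_r,\rho_d,\rho_s,\rho_0,T)$ and $M>K$, $1\le K\le\tau<T$ let $$\gamma_u=\frac{K+\tau}{2\tau(M-K)}\Big(2^{\frac{R}{K(1-\tau/T)}}-1\Big)+\sqrt{\Big(\frac{K+\tau}{2\tau(M-K)}\Big(2^{\frac{R}{K(1-\tau/T)}}-1\Big)\Big)^2+\frac{2^{\frac{R}{K(1-\tau/T)}}-1}{\tau(M-K)}},$$ $$\frac{R}{\zeta_{zf}(M,K,\tau,R,\Theta)}=\alpha K\gamma_u+\rho_s+K\Big(\rho_d+\frac{8K^2\rho_0}{3T}\Big)+M\Big(\rho_r+2K\rho_0+\frac{4K^2\rho_0}{T}\Big).$$ $\zeta^\star_{zf}(R,\Theta)$ is the maximum of $\zeta_{zf}$ over integers $(M,K,\tau)$ with $1\le K\le\tau<T$, $M>K$. *)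

From HB Require Import structures.
From mathcomp Require Import all_boot all_order all_algebra.
From mathcomp Require Import all_classical all_reals exp.
Set Implicit Arguments. Unset Strict Implicit. Unset Printing Implicit Defensive.
Import Order.TTheory GRing.Theory Num.Theory.
Local Open Scope ring_scope.
Local Open Scope classical_set_scope.

Section Defs.
Variable R : realType.

Definition snr_term (K tau T : nat) (Rt : R) : R :=
  2 `^ (Rt / (K%:R * (1 - tau%:R / T%:R))) - 1.

Definition gamma_u (M K tau T : nat) (Rt : R) : R :=
  let c := (K%:R + tau%:R) / (2 * tau%:R * (M%:R - K%:R)) * snr_term K tau T Rt in
  c + Num.sqrt (c ^+ 2 + snr_term K tau T Rt / (tau%:R * (M%:R - K%:R))).

Definition zeta_zf (M K tau : nat) (Rt alpha rho_r rho_d rho_s rho_0 : R) (T : nat) : R :=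
  Rt / (alpha * K%:R * gamma_u M K tau T Rt + rho_s
        + K%:R * (rho_d + 8 * K%:R ^+ 2 * rho_0 / (3 * T%:R))
        + M%:R * (rho_r + 2 * K%:R * rho_0 + 4 * K%:R ^+ 2 * rho_0 / T%:R)).

Definition feasible (M K tau T : nat) : bool :=
  [&& (1 <= K)%N, (K <= tau)%N, (tau < T)%N & (K < M)%N].

(* zeta^star: maximum (taken as the supremum, which is attained) of zeta_zf
   over integer (M,K,tau) with 1 <= K <= tau < T, M > K. *)
Definition zeta_star (Rt alpha rho_r rho_d rho_s rho_0 : R) (T : nat) : R :=
  sup [set z | exists M K tau, feasible M K tau T /\
                 z = zeta_zf M K tau Rt alpha rho_r rho_d rho_s rho_0 T].

Definition eta_star (Gc N0 Rt alpha beta delta mu rho_r : R) (T : nat) : R :=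
  Gc / N0 * zeta_star Rt alpha rho_r (beta * rho_r) (delta * rho_r) (mu * rho_r) T.

End Defs.

(* Under Theta(rho) the denominator of zeta_zf is A + rho B, where
   A = alpha K gamma_u does not depend on rho and B >= delta > 0.  Hence
   1/zeta grows with rho at rate at least delta/R uniformly in (M, K, tau),
   so every value of zeta at rho_2 lies below (1/s + (rho_2 - rho_1) delta/R)^-1
   < s, where s is the maximum at rho_1. *)
From HB Require Import structures.
From mathcomp Require Import all_boot all_order all_algebra.
From mathcomp Require Import all_classical all_reals exp.
From mathcomp Require Import ring lra zify.
Import Order.TTheory GRing.Theory Num.Theory.
Local Open Scope ring_scope.
Local Open Scope classical_set_scope.

Lemma sup_lt_of_invr_gap (R : realType) (S1 S2 : set R) (c : R) :
  0 < c -> has_ubound S1 -> S2 !=set0 -> (forall z, S1 z -> 0 < z) ->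
  (forall z, S2 z -> 0 < z /\ exists2 z1, S1 z1 & z1^-1 + c <= z^-1) ->
  sup S2 < sup S1.
Proof.
move=> c_gt0 ubS1 [z0 S2z0] S1_gt0 gap.
have [_ [z1 S1z1 _]] := gap z0 S2z0.
have s_gt0 : 0 < sup S1 := lt_le_trans (S1_gt0 z1 S1z1) (ub_le_sup ubS1 S1z1).
have bound_gt0 : 0 < (sup S1)^-1 + c by rewrite addr_gt0 ?invr_gt0.
apply: (@le_lt_trans _ _ ((sup S1)^-1 + c)^-1); last first.
  by rewrite -[X in _ < X]invrK ltf_pV2 ?posrE ?invr_gt0 // ltrDl.
apply: ge_sup; first by exists z0.
move=> z S2z; have [z_gt0 [w S1w w_gap]] := gap z S2z.
rewrite -[z]invrK lef_pV2 ?posrE ?invr_gt0 //; apply: le_trans w_gap.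
by rewrite lerD2r lef_pV2 ?posrE ?(S1_gt0 w S1w) // (ub_le_sup ubS1 S1w).
Qed.

Lemma addr_sqrt_sqrD_ge0 (R : rcfType) (c x : R) :
  0 <= x -> 0 <= c + Num.sqrt (c ^+ 2 + x).
Proof.
move=> x_ge0.
have : `|c| <= Num.sqrt (c ^+ 2 + x).
  by rewrite -sqrtr_sqr ler_sqrt ?lerDl // addr_ge0 ?sqr_ge0.
have := ler_norm (- c); rewrite normrN; lra.
Qed.

Section ZetaUnderTheta.
Variables (R : realType) (Rt alpha beta delta mu : R) (T : nat).
Hypotheses (Rt_gt0 : 0 < Rt) (alpha_ge0 : 0 <= alpha) (beta_ge0 : 0 <= beta)
  (delta_gt0 : 0 < delta) (mu_ge0 : 0 <= mu).

Definition zeta_theta (rho : R) (M K tau : nat) : R :=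
  zeta_zf M K tau Rt alpha rho (beta * rho) (delta * rho) (mu * rho) T.

Definition tx_power (M K tau : nat) : R := alpha * K%:R * gamma_u M K tau T Rt.

Definition circuit_coef (M K : nat) : R :=
  delta + K%:R * (beta + 8 * K%:R ^+ 2 * mu / (3 * T%:R))
  + M%:R * (1 + 2 * K%:R * mu + 4 * K%:R ^+ 2 * mu / T%:R).

Lemma zeta_thetaE rho M K tau :
  zeta_theta rho M K tau = Rt / (tx_power M K tau + rho * circuit_coef M K).
Proof. by rewrite /zeta_theta /zeta_zf /tx_power /circuit_coef; congr (_ / _); ring. Qed.

Lemma snr_term_ge0 K tau :
  (1 <= K)%N -> (tau < T)%N -> 0 <= snr_term K tau T Rt.
Proof.
move=> K_ge1 tau_lt_T; rewrite /snr_term subr_ge0.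
have frac_gt0 : 0 < 1 - tau%:R / T%:R :> R.
  by rewrite subr_gt0 ltr_pdivrMr ?mul1r ?ltr_nat ?ltr0n //; lia.
rewrite -[X in X <= _](powRr0 (2 : R)); apply: ler_powR; first by rewrite ler1n.
by rewrite ltW // divr_gt0 // mulr_gt0 // ltr0n.
Qed.

Lemma tx_power_ge0 M K tau : feasible M K tau T -> 0 <= tx_power M K tau.
Proof.
case/and4P=> K_ge1 _ tau_lt_T K_lt_M.
rewrite /tx_power !mulr_ge0 // /gamma_u addr_sqrt_sqrD_ge0 // divr_ge0 //.
  exact: snr_term_ge0.
by rewrite mulr_ge0 // subr_ge0 ler_nat ltnW.
Qed.

Lemma circuit_coef_ge M K : delta <= circuit_coef M K.
Proof.
rewrite /circuit_coef -addrA lerDl.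
by rewrite addr_ge0 // mulr_ge0 // !addr_ge0 // ?divr_ge0 // !mulr_ge0.
Qed.

Lemma zeta_theta_gt0 rho M K tau :
  0 < rho -> feasible M K tau T -> 0 < zeta_theta rho M K tau.
Proof.
move=> rho_gt0 feas; rewrite zeta_thetaE divr_gt0 // ltr_wpDl ?tx_power_ge0 //.
by rewrite mulr_gt0 // (lt_le_trans delta_gt0) ?circuit_coef_ge.
Qed.

Lemma zeta_theta_le rho M K tau :
  0 < rho -> feasible M K tau T -> zeta_theta rho M K tau <= Rt / (rho * delta).
Proof.
move=> rho_gt0 feas; rewrite zeta_thetaE ler_pM2l // lef_pV2 ?posrE ?mulr_gt0 //.
  by rewrite ler_wpDl ?tx_power_ge0 // ler_pM2l ?circuit_coef_ge.
by rewrite ltr_wpDl ?tx_power_ge0 // mulr_gt0 // (lt_le_trans delta_gt0) ?circuit_coef_ge.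
Qed.

Lemma invr_zeta_theta_gap rho1 rho2 M K tau :
  rho1 <= rho2 ->
  (zeta_theta rho1 M K tau)^-1 + (rho2 - rho1) * delta / Rt
    <= (zeta_theta rho2 M K tau)^-1.
Proof.
move=> rho12; rewrite !zeta_thetaE !invf_div -mulrDl ler_pM2r ?invr_gt0 //.
have : (rho2 - rho1) * delta <= (rho2 - rho1) * circuit_coef M K.
  by rewrite ler_wpM2l ?subr_ge0 ?circuit_coef_ge.
lra.
Qed.

Lemma zeta_star_theta_lt rho1 rho2 : (1 < T)%N -> 0 < rho1 -> rho1 < rho2 ->
  zeta_star Rt alpha rho2 (beta * rho2) (delta * rho2) (mu * rho2) T
    < zeta_star Rt alpha rho1 (beta * rho1) (delta * rho1) (mu * rho1) T.
Proof.
move=> T_gt1 rho1_gt0 rho12.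
have feas0 : feasible 2 1 1 T by rewrite /feasible T_gt1.
apply: (@sup_lt_of_invr_gap _ _ _ ((rho2 - rho1) * delta / Rt)).
- by rewrite !mulr_gt0 ?invr_gt0 ?subr_gt0.
- by exists (Rt / (rho1 * delta)) => _ [M [K [tau [feas ->]]]]; exact: zeta_theta_le.
- by exists (zeta_theta rho2 2 1 1), 2%N, 1%N, 1%N.
- by move=> _ [M [K [tau [feas ->]]]]; exact: zeta_theta_gt0.
move=> _ [M [K [tau [feas ->]]]]; split.
  by apply: zeta_theta_gt0 feas; apply: lt_trans rho12.
exists (zeta_theta rho1 M K tau); first by exists M, K, tau.
exact/invr_zeta_theta_gap/ltW.
Qed.

End ZetaUnderTheta.

Theorem corollary2 (R : realType) (alpha Rt Gc N0 beta delta mu rho1 rho2 : R)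
  (T : nat) :
  1 < alpha -> 0 < Rt -> (1 < T)%N -> 0 < Gc -> 0 < N0 ->
  0 < beta -> 0 < delta -> 0 < mu ->
  0 < rho1 -> rho1 < rho2 ->
  eta_star Gc N0 Rt alpha beta delta mu rho2 T
    < eta_star Gc N0 Rt alpha beta delta mu rho1 T.
Proof.
move=> alpha_gt1 Rt_gt0 T_gt1 Gc_gt0 N0_gt0 beta_gt0 delta_gt0 mu_gt0 rho1_gt0 rho12.
rewrite /eta_star ltr_pM2l ?divr_gt0 //.
apply: zeta_star_theta_lt => //; rewrite ltW //.
exact: lt_trans alpha_gt1.
Qed.
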